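(* Let $\mathcal{M}=(E,\rho)$ be a $q$-matroid with exactly one cyclic flat, $\mathcal{Z}(\mathcal{M})=\{\hat Z\}$ (so $\hat Z=\mathrm{cl}(0)=\mathrm{cyc}(E)$ and $\rho(\hat Z)=0$). Then for every subspace $V\le E$: $V$ is a flat if and only if $\hat Z\le V$, and $V$ is open (cyclic) if and only if $V\le\hat Z$. In particular, $\mathrm{cl}(0)=E$ if and only if $\mathcal{M}=\mathcal{U}_0(E)$, and $\mathrm{cyc}(E)=0$ if and only if $\mathcal{M}=\mathcal{U}_{\dim E}(E)$.
   Context: Let $\mathbb{F}=\mathbb{F}_q$. A $q$-matroid is $\mathcal{M}=(E,\rho)$, $E$ a finite-dimensional $\mathbb{F}$-vector space, $\rho$ from subspaces to $\mathbb{Z}_{\ge0}$ with $0\le\rho(V)\le\dim V$, monotone and submodular. Flat: $\rho(F+\langle x\rangle)>\rho(F)$ for all $x\notin F$. Closure: $\mathrm{cl}(V)=\sum\{\langle x\rangle:\rho(V+\langle x\rangle)=\rho(V)\}$. Cyclic core: $\mathrm{cyc}(V)=\{x\in V\mid\rho(W)=\rho(V)\text{ for all }W\le V\text{ with }W+\langle x\rangle=V\}$; $V$ is cyclic (equivalently open, i.e. a sum of circuits) if $\mathrm{cyc}(V)=V$. $\mathcal{Z}(\mathcal{M})$: set of cyclic flats. $\mathcal{U}_k(E)$ is the $q$-matroid with $\rho(V)=\min\{k,\dim V\}$. *)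

From HB Require Import structures.
From mathcomp Require Import all_boot all_order all_algebra all_field.
Set Implicit Arguments. Unset Strict Implicit. Unset Printing Implicit Defensive.
Import GRing.Theory.
Local Open Scope ring_scope.

Section QMatroid.
Variables (F : finFieldType) (vT : vectType F).

(* rank function axioms: 0 <= rho V <= dim V (0 <= automatic in nat),
   monotone, submodular *)
Definition qmatroid (rho : {vspace vT} -> nat) : Prop :=
  [/\ (forall V, (rho V <= \dim V)%N),
      (forall U V : {vspace vT}, (U <= V)%VS -> (rho U <= rho V)%N) &
      (forall U V : {vspace vT},
          (rho (U + V)%VS + rho (U :&: V)%VS <= rho U + rho V)%N)].

Definition qflat (rho : {vspace vT} -> nat) (W : {vspace vT}) : Prop :=
  forall x : vT, x \notin W -> (rho W < rho (W + <[x]>)%VS)%N.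

Definition qcl (rho : {vspace vT} -> nat) (V : {vspace vT}) : {vspace vT} :=
  (\sum_(x : finvect_type vT | rho (V + <[x : vT]>)%VS == rho V) <[x : vT]>)%VS.

Definition in_qcyc (rho : {vspace vT} -> nat) (V : {vspace vT}) (x : vT) : Prop :=
  x \in V /\
  forall W : {vspace vT}, (W <= V)%VS -> (W + <[x]>)%VS = V -> rho W = rho V.

Definition qcyclic (rho : {vspace vT} -> nat) (V : {vspace vT}) : Prop :=
  forall x : vT, in_qcyc rho V x <-> x \in V.

Definition qcyclic_flat (rho : {vspace vT} -> nat) (V : {vspace vT}) : Prop :=
  qflat rho V /\ qcyclic rho V.

Definition uniform_qmatroid (rho : {vspace vT} -> nat) (k : nat) : Prop :=
  forall V : {vspace vT}, rho V = minn k (\dim V).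

End QMatroid.

(* Let Z be the unique cyclic flat. A subspace of maximal dimension among those
   of rank 0, and one of minimal dimension among those with the nullity of E,
   are both cyclic flats, so both equal Z: hence rho Z = 0 and Z has the
   nullity of E. Submodularity then forces rho V = dim (V + Z) - dim Z, i.e.
   M is the free q-matroid on E/Z lifted to E, and for this rank function the
   flats, cyclic spaces, cl(0) and cyc(E) are computed directly. *)
From HB Require Import structures.
From mathcomp Require Import all_boot all_order all_algebra all_field.
From mathcomp Require Import zify.
From Stdlib Require Import Classical Wf_nat.

Set Implicit Arguments. Unset Strict Implicit. Unset Printing Implicit Defensive.
Import GRing.Theory.
Local Open Scope ring_scope.

Lemma ex_minimizer (T : Type) (P : T -> Prop) (f : T -> nat) (x0 : T) :
  P x0 -> exists2 x, P x & forall y, P y -> (f x <= f y)%N.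
Proof.
move=> Px0.
have fx0 : exists n x, P x /\ f x = n by exists (f x0), x0.
have [n [[[x [Px <-]] min_n] _]] := dec_inh_nat_subset_has_unique_least_element
  (fun n => exists x, P x /\ f x = n) (fun n => classic _) fx0.
by exists x => // y Py; apply/leP/min_n; exists y.
Qed.
Arguments ex_minimizer {T} P f [x0].

Section SubspaceFacts.
Variables (K : fieldType) (vT : vectType K).
Implicit Types (U V W : {vspace vT}) (x : vT).

Lemma dimv_add_line U x : x \notin U -> \dim (U + <[x]>) = (\dim U).+1.
Proof.
move=> xU.
have x_neq0 : x != 0 by apply: contraNneq xU => ->; exact: mem0v.
have lt_dim : (\dim U < \dim (U + <[x]>))%N.
  by rewrite (ltn_leqif (dimv_leqif_sup (addvSl U _))) subv_add subvv -memvE.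
have [le_dim _] := dimv_add_leqif U <[x]>.
by move: le_dim; rewrite dim_vline x_neq0; lia.
Qed.

Lemma exists_hyperplane_avoiding U V x : (U <= V)%VS -> x \in V -> x \notin U ->
  exists W, [/\ (U <= W)%VS, (W + <[x]> = V)%VS & x \notin W].
Proof.
move=> sUV xV xU.
set B := (U + <[x]>)%VS; have sBV : (B <= V)%VS by rewrite subv_add sUV -memvE.
exists (U + (V :\: B))%VS; have sum_eq : (U + (V :\: B) + <[x]> = V)%VS.
  by rewrite -addvA (addvC _ <[x]>%VS) addvA -/B addvC addv_diff; apply/addv_idPl.
split=> //; first exact: addvSl.
apply/negP => xW.
have eWV : (U + (V :\: B))%VS = V.
  by rewrite -{2}sum_eq; apply/esym/addv_idPl; rewrite -memvE.
have [le_dim _] := dimv_add_leqif U (V :\: B).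
have := dimv_cap_compl V B; rewrite (capv_idPr sBV) dimv_add_line //.
by move: le_dim; rewrite eWV; lia.
Qed.

End SubspaceFacts.

Lemma sumv_lines (F : finFieldType) (vT : vectType F) (U : {vspace vT}) :
  (\sum_(x : finvect_type vT | (x : vT) \in U) <[x : vT]>)%VS = U.
Proof.
apply: subv_anti; apply/andP; split; first by apply/subv_sumP => x; rewrite memvE.
by apply/subvP => x xU; rewrite memvE (sumv_sup (x : finvect_type vT)).
Qed.

Section QMatroid.
Variables (F : finFieldType) (vT : vectType F) (rho : {vspace vT} -> nat).
Hypothesis rho_qmatroid : qmatroid rho.
Implicit Types (U V W : {vspace vT}) (x : vT).

Definition nullity V := (\dim V - rho V)%N.

Lemma rho_le_dim V : (rho V <= \dim V)%N.
Proof. by case: rho_qmatroid. Qed.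

Lemma rhoS U V : (U <= V)%VS -> (rho U <= rho V)%N.
Proof. by case: rho_qmatroid => _ + _; apply. Qed.

Lemma rho_submod U V : (rho (U + V) + rho (U :&: V) <= rho U + rho V)%N.
Proof. by case: rho_qmatroid => _ _; apply. Qed.

Lemma rho0 : rho 0%VS = 0%N.
Proof. by have := rho_le_dim 0%VS; rewrite dimv0; lia. Qed.

Lemma rho_subadd U V : (rho (U + V) <= rho U + rho V)%N.
Proof. by have := rho_submod U V; lia. Qed.

Lemma rho_line_le1 x : (rho <[x]> <= 1)%N.
Proof. by apply: leq_trans (rho_le_dim _) _; rewrite dim_vline leq_b1. Qed.

Lemma nullityS U V : (U <= V)%VS -> (nullity U <= nullity V)%N.
Proof.
move=> sUV; rewrite /nullity.
have := rho_subadd (V :\: U) U; rewrite addv_diff (addv_idPl sUV).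
have := dimv_cap_compl V U; rewrite (capv_idPr sUV).
have := rho_le_dim (V :\: U); have := rho_le_dim U; lia.
Qed.

Lemma max_rank0_cyclic_flat Y : rho Y = 0%N ->
  (forall W, rho W = 0%N -> (\dim W <= \dim Y)%N) -> qcyclic_flat rho Y.
Proof.
move=> rY maxY; split=> [x xY | x].
  by rewrite rY lt0n; apply/eqP => /maxY; rewrite dimv_add_line // ltnn.
split=> [[] // | xY]; split=> // W sWY _.
by have := rhoS sWY; rewrite rY; lia.
Qed.

Lemma min_full_nullity_cyclic_flat V : nullity V = nullity fullv ->
  (forall W, nullity W = nullity fullv -> (\dim V <= \dim W)%N) ->
  qcyclic_flat rho V.
Proof.
move=> nV minV; split=> [x xV | x].
  have := nullityS (subvf (V + <[x]>)); rewrite -nV /nullity dimv_add_line //.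
  by have := rho_le_dim V; have := rho_le_dim (V + <[x]>); lia.
split=> [[] // | xV]; split=> // W sWV sum_eq.
have rWV := rhoS sWV.
have rVW : (rho V <= rho W + 1)%N.
  by rewrite -sum_eq (leq_trans (rho_subadd _ _)) // leq_add2l rho_line_le1.
have dVW : (\dim V <= (\dim W).+1)%N.
  have [+ _] := dimv_add_leqif W <[x]>; rewrite sum_eq dim_vline.
  by have := leq_b1 (x != 0); lia.
have := rho_le_dim W; have := rho_le_dim V; have := dimvS sWV.
(* If W had the nullity of E, minimality would force W = V; otherwise passing
   from W to V raises the nullity, so the rank cannot rise. *)
have [/[dup] nW /minV | nW] := eqVneq (nullity W) (nullity fullv).
  by rewrite /nullity in nV nW; lia.
by have := nullityS sWV; rewrite /nullity in nV nW *; lia.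
Qed.

Lemma exists_rank0_cyclic_flat : exists2 Z, qcyclic_flat rho Z & rho Z = 0%N.
Proof.
have [Y rY minY] := ex_minimizer (fun W => rho W = 0%N)
  (fun W => \dim (fullv : {vspace vT}) - \dim W)%N rho0.
exists Y => //; apply: max_rank0_cyclic_flat => // W /minY.
by have := dimvS (subvf W); have := dimvS (subvf Y); lia.
Qed.

Lemma exists_full_nullity_cyclic_flat :
  exists2 Z, qcyclic_flat rho Z & nullity Z = nullity fullv.
Proof.
have [V nV minV] := ex_minimizer (fun W => nullity W = nullity fullv)
  (@dimv _ vT) (erefl (nullity fullv)).
by exists V => //; apply: min_full_nullity_cyclic_flat.
Qed.

Lemma rho_eq_quotient_rank Z : rho Z = 0%N -> nullity Z = nullity fullv ->
  forall V, rho V = (\dim (V + Z) - \dim Z)%N.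
Proof.
move=> rZ nZ V; have := rho_submod V Z; have := rhoS (addvSl V Z).
have := nullityS (addvSr V Z); have := nullityS (subvf (V + Z)).
rewrite /nullity in nZ *; have := rho_le_dim (V + Z); lia.
Qed.

End QMatroid.

Section QuotientRank.
Variables (F : finFieldType) (vT : vectType F) (rho : {vspace vT} -> nat).
Variable Z : {vspace vT}.
Hypothesis rhoE : forall V, rho V = (\dim (V + Z) - \dim Z)%N.
Implicit Types (V W : {vspace vT}) (x : vT).

Lemma rho_quotient_add_line V x : rho (V + <[x]>) = (rho V + (x \notin (V + Z)%VS))%N.
Proof.
rewrite !rhoE -addvA (addvC <[x]>%VS) addvA.
have := dimvS (addvSr V Z); case: (boolP (x \in (V + Z)%VS)) => [xVZ | xVZ].
  by rewrite (addv_idPl (_ : <[x]> <= V + Z)%VS) -?memvE //= addn0.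
by rewrite dimv_add_line //; lia.
Qed.

Lemma qflat_quotient V : qflat rho V <-> (Z <= V)%VS.
Proof.
split=> [flatV | sZV x xV]; last first.
  by rewrite rho_quotient_add_line (addv_idPl sZV) xV addn1.
apply/subvP => z zZ; apply/contraT => zV.
by have := flatV z zV; rewrite rho_quotient_add_line (subvP (addvSr V Z)) // addn0 ltnn.
Qed.

Lemma qcl_quotient : qcl rho 0%VS = Z.
Proof.
rewrite /qcl -[RHS]sumv_lines; apply: eq_bigl => x.
by rewrite rho_quotient_add_line -{2}[rho _]addn0 eqn_add2l eqb0 negbK add0v.
Qed.

Lemma in_qcyc_quotient V x : in_qcyc rho V x <-> x \in (V :&: Z)%VS.
Proof.
rewrite memv_cap; split=> [[xV cycx] | /andP[xV xZ]]; last first.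
  split=> // W _ <-; rewrite rho_quotient_add_line.
  by rewrite (subvP (addvSr W Z)) // addn0.
rewrite xV /=; apply/contraT => xZ.
have xVZ : x \notin (V :&: Z)%VS by rewrite memv_cap negb_and xZ orbT.
have [W [sVZW sum_eq xW]] := exists_hyperplane_avoiding (capvSl V Z) xV xVZ.
have sWV : (W <= V)%VS by rewrite -sum_eq addvSl.
have xWZ : x \notin (W + Z)%VS.
  apply: contra xW => /memv_addP[w wW [z zZ x_eq]].
  have zV : z \in V by rewrite -(addKr w z) -x_eq memvD // memvN (subvP sWV).
  by rewrite x_eq memvD // (subvP sVZW) // memv_cap zV.
have := cycx W sWV sum_eq; rewrite -sum_eq rho_quotient_add_line xWZ addn1.
by move/n_Sn.
Qed.

Lemma qcyclic_quotient V : qcyclic rho V <-> (V <= Z)%VS.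
Proof.
split=> [cycV | sVZ x]; first apply/subvP => x xV.
  by have /in_qcyc_quotient := (cycV x).2 xV; rewrite memv_cap => /andP[].
rewrite in_qcyc_quotient memv_cap; split=> [/andP[] // | xV].
by rewrite xV (subvP sVZ).
Qed.

Lemma uniform0_quotient : uniform_qmatroid rho 0 <-> Z = fullv.
Proof.
split=> [unif | eZ V]; last by rewrite rhoE eZ addvf subnn min0n.
apply/eqP; rewrite eqEdim subvf /=.
by have := unif fullv; rewrite rhoE (addv_idPl (subvf Z)) min0n; lia.
Qed.

Lemma uniform_full_quotient :
  uniform_qmatroid rho (\dim (fullv : {vspace vT})) <-> Z = 0%VS.
Proof.
split=> [unif | eZ V]; last first.
  by rewrite rhoE eZ addv0 dimv0 subn0 (minn_idPr (dimvS (subvf V))).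
apply/eqP; rewrite -dimv_eq0.
by have := unif Z; rewrite rhoE addvv subnn (minn_idPr (dimvS (subvf Z))) => <-.
Qed.

End QuotientRank.

Theorem proposition4p8 (F : finFieldType) (vT : vectType F)
  (rho : {vspace vT} -> nat) (Zh : {vspace vT}) :
  qmatroid rho ->
  (forall V : {vspace vT}, qcyclic_flat rho V <-> V = Zh) ->
  [/\ qcl rho 0%VS = Zh,
      (forall x : vT, in_qcyc rho fullv x <-> x \in Zh),
      rho Zh = 0%N,
      (forall V : {vspace vT},
         (qflat rho V <-> (Zh <= V)%VS) /\ (qcyclic rho V <-> (V <= Zh)%VS)) &
      (qcl rho 0%VS = fullv <-> uniform_qmatroid rho 0) /\
      ((forall x : vT, in_qcyc rho fullv x <-> x = 0%R) <->
         uniform_qmatroid rho (\dim (fullv : {vspace vT})))].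
Proof.
move=> rho_qmatroid unique_cyclic_flat.
have [Z0 /unique_cyclic_flat -> rZh] := exists_rank0_cyclic_flat rho_qmatroid.
have [Z1 /unique_cyclic_flat -> nZh] := exists_full_nullity_cyclic_flat rho_qmatroid.
have rhoE := rho_eq_quotient_rank rho_qmatroid rZh nZh.
have cyc_fullE x : in_qcyc rho fullv x <-> x \in Zh.
  by have := in_qcyc_quotient rhoE fullv x; rewrite capfv.
split=> //; first exact: qcl_quotient.
  by move=> V; split; [exact: qflat_quotient | exact: qcyclic_quotient].
split; first by rewrite (qcl_quotient rhoE); exact: iff_sym (uniform0_quotient rhoE).
split=> [cyc0 | /(uniform_full_quotient rhoE) Zh0 x]; last first.
  by rewrite cyc_fullE Zh0 memv0; split=> [/eqP | ->].
apply/(uniform_full_quotient rhoE)/eqP; rewrite -subv0.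
by apply/subvP => x /cyc_fullE /cyc0 ->; exact: mem0v.
Qed.
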